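(* Let $n\ge 30$ be an integer and let $k$ be real with $\frac{n-10}{2}-\sqrt n<k<\frac{n-10}{2}+\sqrt n$. Set $p=1+\frac8k$ and $q=\frac{n-8}{2}$. Then $pJ_2-q_2>0$, where $$J_2=(k+4)(k+6-n)(k+6)(k+8-n)+k(k+2-n)(k+6)(k+8-n)+(k+2)(k+4-n)(k+6)(k+8-n)+k(k+2-n)(k+4)(k+6-n)+(k+2)(k+4-n)(k+4)(k+6-n)+k(k+2-n)(k+2)(k+4-n),$$ $$q_2=\big((q+2)(q+4-n)+q(q+2-n)\big)^2+2q(q+2-n)(q+2)(q+4-n).$$
   Context: Here $k=\frac{8}{p-1}$ corresponds to the homogeneity degree of solutions of $\Delta^4u=|u|^{p-1}u$; the claim is a purely algebraic inequality in the real variable $k$ and the integer $n$. *)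

From Stdlib Require Import Reals.
Open Scope R_scope.

Definition J2 (n k : R) : R :=
  (k+4)*(k+6-n)*(k+6)*(k+8-n) + k*(k+2-n)*(k+6)*(k+8-n)
  + (k+2)*(k+4-n)*(k+6)*(k+8-n) + k*(k+2-n)*(k+4)*(k+6-n)
  + (k+2)*(k+4-n)*(k+4)*(k+6-n) + k*(k+2-n)*(k+2)*(k+4-n).

Definition q2 (n q : R) : R :=
  ((q+2)*(q+4-n) + q*(q+2-n))^2 + 2*q*(q+2-n)*(q+2)*(q+4-n).

(* Multiplying by k > 0 and writing k = (N-10)/2 + t, N = s^2, t = s u with |u| < 1,
   the claim becomes the positivity of a polynomial of degree 8 in s whose coefficients
   are polynomials in u.  Bounding every coefficient from below on [-1, 1] leaves a
   polynomial in s alone, which is positive for s >= 27/5 since all its coefficients are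
   positive after the shift s = 27/5 + w; and N >= 30 > (27/5)^2. *)
From Stdlib Require Import Reals Lra Psatz.
Open Scope R_scope.

(* k * (p * J2 - q2) with p = 1 + 8/k, q = (N-8)/2, expanded in t = k - (N-10)/2. *)
Definition gap_poly (N t : R) : R :=
  554 - 106*t + 92*t^2 - 28*t^3 - 6*t^4 + 6*t^5 + N*(427 - 80*t + 34*t^2 + 3*t^4)
  + N^2*(-51 + 3*t + 3*t^2 - 3*t^3) + N^3*(-51/2 + 3*t - 3/2*t^2) + 3*N^4.

Lemma J2_q2_gap_poly (N k : R) :
  (k + 8) * J2 N k - k * q2 N ((N - 8) / 2) = gap_poly N (k - (N - 10) / 2).
Proof. unfold J2, q2, gap_poly; field. Qed.

Lemma gap_poly_scaled (s u : R) :
  gap_poly (s * s) (s * u) =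
    (3 - 3/2*u^2)*s^8 + (3*u - 3*u^3)*s^7 + (-51/2 + 3*u^2 + 3*u^4)*s^6
    + (3*u + 6*u^5)*s^5 + (-51 + 34*u^2 - 6*u^4)*s^4 + (-80*u - 28*u^3)*s^3
    + (427 + 92*u^2)*s^2 + (-106*u)*s + 554.
Proof. unfold gap_poly; ring. Qed.

Lemma gap_envelope_pos (s : R) : 27/5 <= s ->
  3/2*s^8 - 6/5*s^7 - 51/2*s^6 - 9*s^5 - 51*s^4 - 108*s^3 + 427*s^2 - 106*s + 554 > 0.
Proof.
  intros Hs.
  replace s with ((s - 27/5) + 27/5) by ring.
  assert (Hw : 0 <= s - 27/5) by lra.
  set (w := s - 27/5) in *; clearbody w.
  ring_simplify.
  assert (0 <= w^2) by nra. assert (0 <= w^3) by nra. assert (0 <= w^4) by nra.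
  assert (0 <= w^5) by nra. assert (0 <= w^6) by nra. assert (0 <= w^7) by nra.
  assert (0 <= w^8) by nra.
  lra.
Qed.

Lemma Rmult_pow_ge_compat_r (a b s : R) (j : nat) :
  0 <= s -> a >= b -> a * s^j >= b * s^j.
Proof. intros Hs Hab; apply Rle_ge, Rmult_le_compat_r; [apply pow_le|]; lra. Qed.

Lemma gap_poly_scaled_pos (s u : R) :
  27/5 <= s -> -1 < u < 1 -> gap_poly (s * s) (s * u) > 0.
Proof.
  intros Hs [Hu1 Hu2].
  assert (Hs0 : 0 <= s) by lra.
  assert (c8 : 3 - 3/2*u^2 >= 3/2) by nra.
  (* 3u - 3u^3 >= -6/5 is the inequality (u + 4/7)^2 (8/7 - u) >= 0 *)
  assert (c7 : 3*u - 3*u^3 >= -6/5).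
  { assert (0 <= (u + 4/7)^2 * (8/7 - u)) by (apply Rmult_le_pos; [apply pow2_ge_0|lra]).
    nra. }
  assert (c6 : -51/2 + 3*u^2 + 3*u^4 >= -51/2) by nra.
  assert (c5 : 3*u + 6*u^5 >= -9) by nra.
  assert (c4 : -51 + 34*u^2 - 6*u^4 >= -51) by nra.
  assert (c3 : -80*u - 28*u^3 >= -108) by nra.
  assert (c2 : 427 + 92*u^2 >= 427) by nra.
  assert (c1 : -106*u >= -106) by lra.
  pose proof (Rmult_pow_ge_compat_r _ _ _ 8 Hs0 c8).
  pose proof (Rmult_pow_ge_compat_r _ _ _ 7 Hs0 c7).
  pose proof (Rmult_pow_ge_compat_r _ _ _ 6 Hs0 c6).
  pose proof (Rmult_pow_ge_compat_r _ _ _ 5 Hs0 c5).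
  pose proof (Rmult_pow_ge_compat_r _ _ _ 4 Hs0 c4).
  pose proof (Rmult_pow_ge_compat_r _ _ _ 3 Hs0 c3).
  pose proof (Rmult_pow_ge_compat_r _ _ _ 2 Hs0 c2).
  pose proof (Rmult_pow_ge_compat_r _ _ _ 1 Hs0 c1).
  pose proof (gap_envelope_pos s Hs).
  rewrite gap_poly_scaled; simpl pow in *; lra.
Qed.

Lemma gap_poly_pos (N t : R) :
  (27/5)^2 <= N -> Rabs t < sqrt N -> gap_poly N t > 0.
Proof.
  intros HN Ht.
  set (s := sqrt N) in Ht.
  assert (Hss : s * s = N) by (apply sqrt_sqrt; nra).
  assert (Hs : 27/5 <= s).
  { rewrite <- (sqrt_pow2 (27/5)) by lra. apply sqrt_le_1_alt; lra. }
  assert (Hsu : s * (t / s) = t) by (field; lra).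
  rewrite <- Hss, <- Hsu.
  apply gap_poly_scaled_pos; [lra|].
  apply Rabs_def2 in Ht.
  split; [apply Rmult_lt_reg_r with s | apply Rmult_lt_reg_r with s];
    try lra; unfold Rdiv; rewrite Rmult_assoc, Rinv_l; lra.
Qed.

Theorem lemma8p3 (n : nat) (k : R) :
  (30 <= n)%nat ->
  (INR n - 10) / 2 - sqrt (INR n) < k ->
  k < (INR n - 10) / 2 + sqrt (INR n) ->
  let p := 1 + 8 / k in
  let q := (INR n - 8) / 2 in
  p * J2 (INR n) k - q2 (INR n) q > 0.
Proof.
  intros Hn Hlo Hhi p q; unfold p, q.
  assert (HN : 30 <= INR n) by (apply le_INR in Hn; simpl in Hn; lra).
  assert (Hsqrt : sqrt (INR n) < INR n / 2 - 5).
  { pose proof (sqrt_pos (INR n)).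
    assert (sqrt (INR n) * sqrt (INR n) = INR n) by (apply sqrt_sqrt; lra).
    nra. }
  assert (Hk : 0 < k) by lra.
  replace ((1 + 8 / k) * J2 (INR n) k - q2 (INR n) ((INR n - 8) / 2))
    with (((k + 8) * J2 (INR n) k - k * q2 (INR n) ((INR n - 8) / 2)) / k)
    by (field; lra).
  apply Rdiv_lt_0_compat; [|exact Hk].
  rewrite J2_q2_gap_poly.
  apply gap_poly_pos; [lra|].
  apply Rabs_def1; lra.
Qed.
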